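(* Let $F$ be a special multifield and $F^\bullet=F\setminus\{0\}$. Define a relation on $F^\bullet\times F^\bullet$ by $\langle a,b\rangle\equiv\langle c,d\rangle$ iff $ab=cd$ and $a\in c+d$. Then $(F^\bullet,\equiv,-1)$ is a special group.
   Context: A multiring is a tuple $(R,+,\cdot,-,0,1)$ with $+:R\times R\to\mathcal P(R)\setminus\{\emptyset\}$ satisfying: $z\in x+y\Rightarrow x\in z+(-y)$ and $y\in(-x)+z$; $y\in0+x\iff y=x$; $(x+y)+z=x+(y+z)$ (with $Z+w=\bigcup_{z\in Z}(z+w)$); $x+y=y+x$; $(R,\cdot,1)$ a commutative monoid; $a0=0$; $c\in a+b\Rightarrow cd\in ad+bd$. A multifield is a multiring with every nonzero element invertible. A special multifield is a multifield $F$ such that, with $F^\bullet=F\setminus\{0\}$: (i) $a^2=1$ for all $a\in F^\bullet$; (ii) $a+(-a)=F$ for all $a\in F^\bullet$; (iii) for $a,b,c,d\in F^\bullet$, $ab=cd$ and $a\in c+d$ imply $c\in a+b$; (iv) for $a,\dots,f\in F^\bullet$, $ab=cd=ef$, $a\in c+d$, $c\in e+f$ imply $a\in e+f$; (v) for $a,b,c,d\in F^\bullet$, if there are $x,y,z\in F^\bullet$ with $ax=cy$, $a=xz$, $c=yz$, $a\in c+y$, $b\in x+z$, $d\in y+z$, then there are $t,v,w\in F^\bullet$ with $bt=cv$, $b=tw$, $c=vw$, $b\in c+v$, $a\in t+w$, $d\in v+w$. A special group is a tuple $(G,-1,\equiv)$ where $G$ is a group with $g^2=1$ for all $g$, $-1\in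 G$, and $\equiv$ a relation on $G\times G$ such that: (SG0) $\equiv$ is an equivalence relation; (SG1) $\langle a,b\rangle\equiv\langle b,a\rangle$; (SG2) $\langle a,-a\rangle\equiv\langle1,-1\rangle$ with $-a=(-1)a$; (SG3) $\langle a,b\rangle\equiv\langle c,d\rangle\Rightarrow ab=cd$; (SG4) $\langle a,b\rangle\equiv\langle c,d\rangle\Rightarrow\langle a,-c\rangle\equiv\langle -b,d\rangle$; (SG5) $\langle a,b\rangle\equiv\langle c,d\rangle\Rightarrow\langle ga,gb\rangle\equiv\langle gc,gd\rangle$; (SG6) the relation on $G^3$ given by $\langle a_1,a_2,a_3\rangle\equiv\langle b_1,b_2,b_3\rangle$ iff $\exists x,y,z$ with $\langle a_1,x\rangle\equiv\langle b_1,y\rangle$, $\langle a_2,a_3\rangle\equiv\langle x,z\rangle$, $\langle b_2,b_3\rangle\equiv\langle y,z\rangle$ is transitive. *)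

(* Data of a multiring.  [add x y z] means  z \in x + y  (multivalued sum). *)
Record mr := MR {
  car : Type;
  add : car -> car -> car -> Prop;
  opp : car -> car;
  zero : car;
  one : car;
  mul : car -> car -> car
}.

Arguments add {m} _ _ _.
Arguments opp {m} _.
Arguments zero {m}.
Arguments one {m}.
Arguments mul {m} _ _.

Record is_multiring (F : mr) : Prop := {
  mr_nonempty : forall x y : car F, exists z, add x y z;
  mr_rev : forall x y z : car F, add x y z -> add z (opp y) x /\ add (opp x) z y;
  mr_zero : forall x y : car F, add zero x y <-> y = x;
  mr_assoc : forall x y z v : car F,
      (exists t, add x y t /\ add t z v) <-> (exists t, add y z t /\ add x t v);
  mr_comm : forall x y v : car F, add x y v <-> add y x v;
  mr_mulA : forall x y z : car F, mul x (mul y z) = mul (mul x y) z;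
  mr_mulC : forall x y : car F, mul x y = mul y x;
  mr_mul1 : forall x : car F, mul one x = x;
  mr_mul0 : forall a : car F, mul a zero = zero;
  mr_distr : forall a b c d : car F, add a b c -> add (mul a d) (mul b d) (mul c d)
}.

Record is_multifield (F : mr) : Prop := {
  mf_mr : is_multiring F;
  mf_nontriv : (one : car F) <> zero;
  mf_inv : forall x : car F, x <> zero -> exists y, mul x y = one
}.

Record is_special_multifield (F : mr) : Prop := {
  smf_mf : is_multifield F;
  smf_sq : forall a : car F, a <> zero -> mul a a = one;
  smf_opp : forall a : car F, a <> zero -> forall x, add a (opp a) x;
  smf_iii : forall a b c d : car F, a <> zero -> b <> zero -> c <> zero -> d <> zero ->
      mul a b = mul c d -> add c d a -> add a b c;
  smf_iv : forall a b c d e f : car F,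
      a <> zero -> b <> zero -> c <> zero -> d <> zero -> e <> zero -> f <> zero ->
      mul a b = mul c d -> mul c d = mul e f -> add c d a -> add e f c -> add e f a;
  smf_v : forall a b c d : car F, a <> zero -> b <> zero -> c <> zero -> d <> zero ->
      (exists x y z : car F, x <> zero /\ y <> zero /\ z <> zero /\
         mul a x = mul c y /\ a = mul x z /\ c = mul y z /\
         add c y a /\ add x z b /\ add y z d) ->
      (exists t v w : car F, t <> zero /\ v <> zero /\ w <> zero /\
         mul b t = mul c v /\ b = mul t w /\ c = mul v w /\
         add c v b /\ add t w a /\ add v w d)
}.

(* Special groups: (G, -1, equiv), with G a group of exponent 2.
   [eqv a b c d] stands for  <a,b> == <c,d>. *)
Definition ternary {G : Type} (eqv : G -> G -> G -> G -> Prop)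
    (a1 a2 a3 b1 b2 b3 : G) : Prop :=
  exists x y z, eqv a1 x b1 y /\ eqv a2 a3 x z /\ eqv b2 b3 y z.

Record is_special_group {G : Type} (gm : G -> G -> G) (g1 m1 : G)
    (eqv : G -> G -> G -> G -> Prop) : Prop := {
  sg_assoc : forall x y z, gm x (gm y z) = gm (gm x y) z;
  sg_idl : forall x, gm g1 x = x;
  sg_idr : forall x, gm x g1 = x;
  sg_inv : forall x, exists y, gm x y = g1 /\ gm y x = g1;
  sg_sq : forall g, gm g g = g1;
  SG0_refl : forall a b, eqv a b a b;
  SG0_sym : forall a b c d, eqv a b c d -> eqv c d a b;
  SG0_trans : forall a b c d e f, eqv a b c d -> eqv c d e f -> eqv a b e f;
  SG1 : forall a b, eqv a b b a;
  SG2 : forall a, eqv a (gm m1 a) g1 m1;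
  SG3 : forall a b c d, eqv a b c d -> gm a b = gm c d;
  SG4 : forall a b c d, eqv a b c d -> eqv a (gm m1 c) (gm m1 b) d;
  SG5 : forall a b c d g, eqv a b c d -> eqv (gm g a) (gm g b) (gm g c) (gm g d);
  SG6 : forall a1 a2 a3 b1 b2 b3 c1 c2 c3,
      ternary eqv a1 a2 a3 b1 b2 b3 -> ternary eqv b1 b2 b3 c1 c2 c3 ->
      ternary eqv a1 a2 a3 c1 c2 c3
}.

Definition Fdot (F : mr) : Type := { x : car F | x <> zero }.

Lemma mf_mul_nz (F : mr) (H : is_multifield F) (a b : car F) :
  a <> zero -> b <> zero -> mul a b <> zero.
Proof.
  intros Ha Hb Hab. destruct H as [Hm _ Hinv].
  destruct (Hinv a Ha) as [a' Ha'].
  apply Hb.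
  rewrite <- (mr_mul1 _ Hm b), <- Ha', (mr_mulC _ Hm a a'), <- (mr_mulA _ Hm), Hab.
  apply (mr_mul0 _ Hm).
Qed.

Lemma mf_one_nz (F : mr) (H : is_multifield F) : (one : car F) <> zero.
Proof. exact (mf_nontriv _ H). Qed.

Lemma mf_m1_nz (F : mr) (H : is_multifield F) : opp (one : car F) <> zero.
Proof.
  intro E. destruct H as [Hm Hn _]. apply Hn.
  assert (H01 : add (zero : car F) one one) by (apply (mr_zero _ Hm); reflexivity).
  destruct (mr_rev _ Hm _ _ _ H01) as [H1 _].
  rewrite E in H1. apply (mr_comm _ Hm) in H1. apply (mr_zero _ Hm) in H1.
  symmetry; exact H1.
Qed.

Definition dot_mul (F : mr) (H : is_multifield F) (x y : Fdot F) : Fdot F :=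
  exist _ (mul (proj1_sig x) (proj1_sig y))
        (mf_mul_nz F H _ _ (proj2_sig x) (proj2_sig y)).

Definition dot_one (F : mr) (H : is_multifield F) : Fdot F :=
  exist _ one (mf_one_nz F H).

Definition dot_m1 (F : mr) (H : is_multifield F) : Fdot F :=
  exist _ (opp one) (mf_m1_nz F H).

Definition dot_equiv (F : mr) (a b c d : Fdot F) : Prop :=
  mul (proj1_sig a) (proj1_sig b) = mul (proj1_sig c) (proj1_sig d) /\
  add (proj1_sig c) (proj1_sig d) (proj1_sig a).

From Stdlib Require Import ProofIrrelevance.

(* The multiplicative group of a special multifield has exponent 2, and axioms
   (iii) and (iv) say precisely that <a,b> == <c,d> is symmetric and transitive.
   The real content is SG6.  Scaling by g = a1 a2 a3 turns a ternary form
   <a1,a2,a3> into one whose third entry is the product of the first two, and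
   for such forms axiom (v) is exactly the symmetry exchanging the first two
   entries.  Hence the ternary relation is invariant under permuting entries,
   and so one may replace any two entries by an equivalent binary form; three
   such replacements give transitivity. *)

Section Multiring.

Variable R : mr.
Hypothesis HR : is_multiring R.

Lemma mr_oppK (x : car R) : opp (opp x) = x.
Proof.
  assert (H0x : add zero x x) by (apply (mr_zero _ HR); reflexivity).
  apply (mr_rev _ HR) in H0x as [Hx0 _].
  apply (mr_rev _ HR) in Hx0 as [H0 _].
  symmetry; exact (proj1 (mr_zero _ HR _ _) H0).
Qed.

Lemma mr_mulN1 (x : car R) : mul (opp one) x = opp x.
Proof.
  assert (H01 : add zero one one) by (apply (mr_zero _ HR); reflexivity).
  apply (mr_rev _ HR) in H01 as [H10 _].
  apply (mr_distr _ HR _ _ _ x) in H10.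
  rewrite (mr_mul1 _ HR), (mr_mulC _ HR zero), (mr_mul0 _ HR) in H10.
  apply (mr_rev _ HR) in H10 as [_ H].
  apply (mr_comm _ HR), (mr_zero _ HR) in H; exact H.
Qed.

End Multiring.

Lemma Fdot_eq (F : mr) (x y : Fdot F) : proj1_sig x = proj1_sig y -> x = y.
Proof. apply eq_sig_hprop; intros; apply proof_irrelevance. Qed.

Section SpecialMultifield.

Variable F : mr.
Hypothesis HF : is_special_multifield F.

Let HM : is_multifield F := smf_mf F HF.
Let HR : is_multiring F := mf_mr F HM.

Local Notation G := (Fdot F).
Local Notation "x * y" := (dot_mul F HM x y).
Local Notation "` x" := (proj1_sig x) (at level 9, format "` x").
Local Notation T := (ternary (dot_equiv F)).

Lemma smf_add_left (a b : car F) : a <> zero -> add a b a.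
Proof.
  intro Ha.
  destruct (mr_rev _ HR _ _ _ (smf_opp _ HF a Ha b)) as [H _].
  rewrite (mr_oppK _ HR) in H.
  apply (mr_comm _ HR); exact H.
Qed.

Lemma dot_mulA (x y z : G) : x * (y * z) = (x * y) * z.
Proof. apply Fdot_eq, (mr_mulA _ HR). Qed.

Lemma dot_mulC (x y : G) : x * y = y * x.
Proof. apply Fdot_eq, (mr_mulC _ HR). Qed.

Lemma dot_mul1 (x : G) : dot_one F HM * x = x.
Proof. apply Fdot_eq, (mr_mul1 _ HR). Qed.

Lemma dot_mulxx (x : G) : x * x = dot_one F HM.
Proof. apply Fdot_eq, (smf_sq _ HF), proj2_sig. Qed.

Lemma dot_mulK (x y : G) : x * (x * y) = y.
Proof. rewrite dot_mulA, dot_mulxx; apply dot_mul1. Qed.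

Lemma dot_mulKC (x y : G) : x * (y * x) = y.
Proof. rewrite (dot_mulC y); apply dot_mulK. Qed.

Lemma dot_mul_scaled (g x y : G) : (g * x) * (g * y) = x * y.
Proof. rewrite <- dot_mulA, (dot_mulC x), <- dot_mulA, dot_mulK; apply dot_mulC. Qed.

Lemma dot_mul_cancel_last (x y z : G) : (x * (y * z)) * z = x * y.
Proof.
  rewrite dot_mulC, (dot_mulC y), (dot_mulA x z y), (dot_mulC x z), <- (dot_mulA z x y).
  apply dot_mulK.
Qed.

Lemma dot_mul_swap (a b c d : G) : a * b = c * d -> a * c = b * d.
Proof.
  intro E.
  rewrite <- (dot_mulK b (a * c)); f_equal.
  rewrite dot_mulA, (dot_mulC b), E, dot_mulC; apply dot_mulK.
Qed.

Lemma dot_equivE (a b c d : G) :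
  dot_equiv F a b c d <-> a * b = c * d /\ add (` c) (` d) (` a).
Proof.
  split; intros [E Hadd]; split; try exact Hadd.
  - apply Fdot_eq; exact E.
  - exact (f_equal (@proj1_sig _ _) E).
Qed.

Lemma equiv_refl (a b : G) : dot_equiv F a b a b.
Proof. split; [reflexivity | apply smf_add_left, proj2_sig]. Qed.

Lemma equiv_sym (a b c d : G) : dot_equiv F a b c d -> dot_equiv F c d a b.
Proof.
  intros [E Hadd]; split; [symmetry; exact E |].
  exact (smf_iii _ HF _ _ _ _ (proj2_sig a) (proj2_sig b) (proj2_sig c) (proj2_sig d) E Hadd).
Qed.

Lemma equiv_trans (a b c d e f : G) :
  dot_equiv F a b c d -> dot_equiv F c d e f -> dot_equiv F a b e f.
Proof.
  intros [E1 H1] [E2 H2]; split; [congruence |].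
  exact (smf_iv _ HF _ _ _ _ _ _ (proj2_sig a) (proj2_sig b) (proj2_sig c)
           (proj2_sig d) (proj2_sig e) (proj2_sig f) E1 E2 H1 H2).
Qed.

Lemma equiv_comm (a b : G) : dot_equiv F a b b a.
Proof.
  apply dot_equivE; split; [apply dot_mulC |].
  apply (mr_comm _ HR), smf_add_left, proj2_sig.
Qed.

Lemma equiv_mul (g a b c d : G) :
  dot_equiv F a b c d -> dot_equiv F (g * a) (g * b) (g * c) (g * d).
Proof.
  intros [E Hadd]%dot_equivE; apply dot_equivE; split.
  - rewrite !dot_mul_scaled; exact E.
  - apply (mr_distr _ HR _ _ _ (` g)) in Hadd; simpl.
    rewrite !(mr_mulC _ HR (` g)); exact Hadd.
Qed.

Lemma equiv_prod (a b c d : G) : dot_equiv F a b c d -> a * b = c * d.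
Proof. intros H%dot_equivE; apply H. Qed.

Lemma equiv_m1 (a : G) :
  dot_equiv F a (dot_m1 F HM * a) (dot_one F HM) (dot_m1 F HM).
Proof.
  apply dot_equivE; split.
  - rewrite dot_mulC, <- dot_mulA, dot_mulxx; apply dot_mulC.
  - apply (smf_opp _ HF), proj2_sig.
Qed.

(* ab = cd  and  c \in a + b  give  -b \in a + (-c); now apply axiom (iii). *)
Lemma equiv_neg (a b c d : G) :
  dot_equiv F a b c d ->
  dot_equiv F a (dot_m1 F HM * c) (dot_m1 F HM * b) d.
Proof.
  intro Habcd.
  pose proof (equiv_prod _ _ _ _ Habcd) as E.
  destruct (equiv_sym _ _ _ _ Habcd) as [_ Hc].
  apply (mr_rev _ HR) in Hc as [_ Hb].
  apply (mr_distr _ HR _ _ _ (opp one)) in Hb.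
  rewrite !(mr_mulC _ HR _ (opp one)), !(mr_mulN1 _ HR), (mr_oppK _ HR) in Hb.
  apply equiv_sym, dot_equivE; split.
  - rewrite <- dot_mulA, (dot_mulC a), <- dot_mulA, (dot_mulC c); f_equal.
    symmetry; apply dot_mul_swap; exact E.
  - simpl; rewrite !(mr_mulN1 _ HR); exact Hb.
Qed.

Lemma ternary_sym (a1 a2 a3 b1 b2 b3 : G) :
  T a1 a2 a3 b1 b2 b3 -> T b1 b2 b3 a1 a2 a3.
Proof.
  intros (x & y & z & H1 & H2 & H3).
  exists y, x, z; split; [apply equiv_sym |]; auto.
Qed.

Lemma ternary_equiv23_right (a1 a2 a3 b1 b2 b3 c2 c3 : G) :
  T a1 a2 a3 b1 b2 b3 -> dot_equiv F b2 b3 c2 c3 -> T a1 a2 a3 b1 c2 c3.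
Proof.
  intros (x & y & z & H1 & H2 & H3) Hbc.
  exists x, y, z; split; [| split]; auto.
  apply (equiv_trans _ _ b2 b3); [apply equiv_sym |]; auto.
Qed.

Lemma ternary_swap23_right (a1 a2 a3 b1 b2 b3 : G) :
  T a1 a2 a3 b1 b2 b3 -> T a1 a2 a3 b1 b3 b2.
Proof. intro Tab; apply (ternary_equiv23_right _ _ _ _ _ _ _ _ Tab), equiv_comm. Qed.

Lemma ternary_mul (g a1 a2 a3 b1 b2 b3 : G) :
  T a1 a2 a3 b1 b2 b3 -> T (g * a1) (g * a2) (g * a3) (g * b1) (g * b2) (g * b3).
Proof.
  intros (x & y & z & H1 & H2 & H3).
  exists (g * x), (g * y), (g * z); split; [| split]; apply equiv_mul; assumption.
Qed.

Lemma ternary_prod (a1 a2 a3 b1 b2 b3 : G) :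
  T a1 a2 a3 b1 b2 b3 -> a1 * (a2 * a3) = b1 * (b2 * b3).
Proof.
  intros (x & y & z & H1%equiv_prod & H2%equiv_prod & H3%equiv_prod).
  rewrite H2, H3, !dot_mulA, H1; reflexivity.
Qed.

Lemma ternary_swap12_left_prod (a b c d ab cd : G) :
  ab = a * b -> cd = c * d -> T a b ab c d cd -> T b a ab c d cd.
Proof.
  intros -> -> (x & y & z & [Eacxy Hac] & [Exz Hxz]%dot_equivE & [Eyz Hyz]%dot_equivE).
  rewrite dot_mulKC in Exz, Eyz.
  destruct (smf_v _ HF _ _ _ _ (proj2_sig a) (proj2_sig b) (proj2_sig c) (proj2_sig d))
    as (t & v & w & Ht & Hv & Hw & Ebtcv & Eb & Ec & Hbc & Htw & Hvw).
  { exists (` x), (` y), (` z).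
    repeat split; try apply proj2_sig; try assumption.
    - exact (f_equal (@proj1_sig _ _) Exz).
    - exact (f_equal (@proj1_sig _ _) Eyz). }
  exists (exist _ t Ht), (exist _ v Hv), (exist _ w Hw).
  repeat split; simpl; try assumption.
  - rewrite <- Eb; exact (f_equal (@proj1_sig _ _) (dot_mulK a b)).
  - rewrite <- Ec; exact (f_equal (@proj1_sig _ _) (dot_mulKC d c)).
Qed.

Lemma ternary_swap12_left (a1 a2 a3 b1 b2 b3 : G) :
  T a1 a2 a3 b1 b2 b3 -> T a2 a1 a3 b1 b2 b3.
Proof.
  intro Tab.
  pose (g := a1 * (a2 * a3)).
  assert (Ea : g * a3 = (g * a1) * (g * a2)).
  { rewrite dot_mul_scaled; apply dot_mul_cancel_last. }
  assert (Eb : g * b3 = (g * b1) * (g * b2)).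
  { rewrite dot_mul_scaled; unfold g; rewrite (ternary_prod _ _ _ _ _ _ Tab).
    apply dot_mul_cancel_last. }
  pose proof (ternary_mul g _ _ _ _ _ _
    (ternary_swap12_left_prod _ _ _ _ _ _ Ea Eb (ternary_mul g _ _ _ _ _ _ Tab))) as Tg.
  rewrite !dot_mulK in Tg; exact Tg.
Qed.

Lemma ternary_swap12_right (a1 a2 a3 b1 b2 b3 : G) :
  T a1 a2 a3 b1 b2 b3 -> T a1 a2 a3 b2 b1 b3.
Proof. intro Tab; apply ternary_sym, ternary_swap12_left, ternary_sym, Tab. Qed.

Lemma ternary_equiv12_right (a1 a2 a3 b1 b2 b3 c1 c2 : G) :
  T a1 a2 a3 b1 b2 b3 -> dot_equiv F b1 b2 c1 c2 -> T a1 a2 a3 c1 c2 b3.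
Proof.
  intros Tab Hbc.
  apply ternary_swap23_right, ternary_swap12_right.
  apply (ternary_equiv23_right _ _ _ _ b1 b2); [| exact Hbc].
  apply ternary_swap23_right, ternary_swap12_right,
        ternary_swap23_right, ternary_swap12_right, Tab.
Qed.

Lemma ternary_trans (a1 a2 a3 b1 b2 b3 c1 c2 c3 : G) :
  T a1 a2 a3 b1 b2 b3 -> T b1 b2 b3 c1 c2 c3 -> T a1 a2 a3 c1 c2 c3.
Proof.
  intros Tab (x & y & z & H1 & H2 & H3).
  apply (ternary_equiv23_right _ _ _ _ y z); [| apply equiv_sym, H3].
  apply (ternary_equiv12_right _ _ _ b1 x); [| exact H1].
  apply (ternary_equiv23_right _ _ _ _ b2 b3); assumption.
Qed.

End SpecialMultifield.

Theorem theorem5p10 (F : mr) (H : is_special_multifield F) :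
  is_special_group (dot_mul F (smf_mf F H)) (dot_one F (smf_mf F H))
                   (dot_m1 F (smf_mf F H)) (dot_equiv F).
Proof.
  split.
  - exact (dot_mulA F H).
  - exact (dot_mul1 F H).
  - intro x; rewrite dot_mulC; apply dot_mul1.
  - intro x; exists x; split; apply dot_mulxx.
  - exact (dot_mulxx F H).
  - exact (equiv_refl F H).
  - exact (equiv_sym F H).
  - exact (equiv_trans F H).
  - exact (equiv_comm F H).
  - exact (equiv_m1 F H).
  - exact (equiv_prod F H).
  - exact (equiv_neg F H).
  - intros a b c d g; exact (equiv_mul F H g a b c d).
  - exact (ternary_trans F H).
Qed.
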